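(* Let $N\ge1$ and let $\{x_j\}_{j=0}^N$ be the Legendre–Gauss–Radau points (the zeros of $P_N(x)+P_{N+1}(x)$, with $x_0=-1$), with weights $\omega_j=\frac{1}{(N+1)^2}\frac{1-x_j}{P_N^2(x_j)}$. Let $B_0,\dots,B_N\in\mathbb{P}_N$ be defined by $B_0(-1)=1$, $B_0'(x_i)=0$ ($1\le i\le N$), and $B_j(-1)=0$, $B_j'(x_i)=\delta_{ij}$ ($1\le i,j\le N$). Then $B_0(x)=1$ and $$B_j(x)=\sum_{k=0}^{N-1}\alpha_{kj}\frac{\partial_x^{-1}P_k(x)}{\gamma_k},\qquad \alpha_{kj}=\big(P_k(x_j)-(-1)^{N+k}P_N(x_j)\big)\omega_j,\quad 1\le j\le N,$$ where $\gamma_k=\frac{2}{2k+1}$.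
   Context: $P_k$ is the Legendre polynomial of degree $k$; $\partial_x^{-1}u(x)=\int_{-1}^xu(t)\,dt$. $\mathbb{P}_N$ is the space of polynomials of degree at most $N$. *)

From HB Require Import structures.
From mathcomp Require Import all_boot all_order all_algebra.
Set Implicit Arguments. Unset Strict Implicit. Unset Printing Implicit Defensive.
Import Order.TTheory GRing.Theory Num.Theory.
Local Open Scope ring_scope.

Fixpoint legendre_pair (R : fieldType) (k : nat) : {poly R} * {poly R} :=
  match k with
  | 0%N => (1, 'X)
  | k'.+1 =>
      let: (p, q) := legendre_pair R k' in
      (q, (k'.+2%:R)^-1 *: ((2 * k' + 3)%N%:R *: ('X * q) - (k'.+1%:R) *: p))
  end.

Definition legendre (R : fieldType) (k : nat) : {poly R} := (legendre_pair R k).1.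

Definition poly_prim (R : fieldType) (p : {poly R}) : {poly R} :=
  \poly_(i < (size p).+1) (if i is i'.+1 then p`_i' / (i'.+1)%:R else 0).

(* partial_x^{-1} p (x) = int_{-1}^x p(t) dt *)
Definition antideriv (R : fieldType) (p : {poly R}) : {poly R} :=
  poly_prim p - ((poly_prim p).[-1])%:P.

Definition lgr_weight (R : fieldType) (N : nat) (xj : R) : R :=
  ((N.+1%:R) ^+ 2)^-1 * ((1 - xj) / ((legendre R N).[xj]) ^+ 2).

Definition lgamma (R : fieldType) (k : nat) : R := 2 / (2 * k + 1)%N%:R.

Definition lalpha (R : fieldType) (N k : nat) (xj : R) : R :=
  ((legendre R k).[xj] - (-1) ^+ (N + k) * (legendre R N).[xj]) * lgr_weight N xj.

From HB Require Import structures.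
From mathcomp Require Import all_boot all_order all_algebra.
From mathcomp Require Import ring.
Set Implicit Arguments. Unset Strict Implicit. Unset Printing Implicit Defensive.
Import Order.TTheory GRing.Theory Num.Theory.
Local Open Scope ring_scope.

(* Write K_n(x, y) = sum_{k<n} (2k+1) P_k(x) P_k(y) for the Christoffel-Darboux
   kernel.  From the three-term recurrence we derive P_k(-1) = (-1)^k, the
   identity (1 - x^2) P_n' = (n+1)(x P_n - P_{n+1}) with its companion, and the
   Christoffel-Darboux formula together with its confluent form.  The Radau
   nodes are the points with P_{N+1} = -P_N; -1 is one of them, the formula
   gives K_{N+1}(a, b) = 0 for distinct nodes, and the confluent form gives
   omega_a K_{N+1}(a, a) = 2 at every node a <> -1.  Since alpha_{kj}/gamma_k
   expands into kernel terms, these facts yield the discrete reproducing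
   identity sum_k alpha_{kj}/gamma_k P_k(x_i) = delta_{ij} for i, j >= 1.

   The theorem then follows from unisolvence of the interpolation problem: a
   polynomial of degree <= N is determined by its value at -1 and the values
   of its derivative at N distinct points.  Both 1 and the claimed sums of
   antiderivatives solve the same problems as B_0 and B_j respectively. *)

Lemma legendreSS (R : fieldType) k : legendre R k.+2 =
  k.+2%:R^-1 *: ((2 * k + 3)%:R *: ('X * legendre R k.+1) - k.+1%:R *: legendre R k).
Proof. by rewrite /legendre /=; case: (legendre_pair R k). Qed.

Lemma size_legendre (R : fieldType) k : (size (legendre R k) <= k.+1)%N.
Proof.
suff: (size (legendre R k) <= k.+1)%N /\ (size (legendre R k.+1) <= k.+2)%N by case.
elim: k => [|k [IHk IHk1]]; first by rewrite size_poly1 size_polyX.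
split=> //; rewrite legendreSS.
apply: leq_trans (size_scale_leq _ _) _; apply: leq_trans (size_polyD _ _) _.
rewrite size_polyN geq_max; apply/andP; split.
- apply: leq_trans (size_scale_leq _ _) _; apply: leq_trans (size_polyMleq _ _) _.
  by rewrite size_polyX add2n /= ltnS.
- apply: leq_trans (size_scale_leq _ _) _; apply: leq_trans IHk _.
  exact: leq_trans (leqnSn _) (leqnSn _).
Qed.

Section LegendreValues.

Variable R : numFieldType.
Local Notation P k := (horner (legendre R k)).
Local Notation dP k := (horner (legendre R k)^`()).

Lemma natrSD_neq0 m n : (m.+1%:R + n%:R : R) != 0.
Proof. by rewrite -natrD pnatr_eq0. Qed.

Lemma horner_legendre0 x : P 0 x = 1.    Proof. exact: hornerC. Qed.
Lemma horner_legendre1 x : P 1 x = x.    Proof. exact: hornerX. Qed.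
Lemma horner_dlegendre0 x : dP 0 x = 0.  Proof. by rewrite derivC hornerC. Qed.
Lemma horner_dlegendre1 x : dP 1 x = 1.  Proof. by rewrite derivX hornerC. Qed.

Lemma horner_legendreSS k x : P k.+2 x =
  ((2 * k + 3)%:R * x * P k.+1 x - k.+1%:R * P k x) / k.+2%:R.
Proof.
rewrite legendreSS hornerZ hornerD hornerN !hornerZ hornerM hornerX.
by field; exact: natrSD_neq0.
Qed.

Lemma horner_dlegendreSS k x : dP k.+2 x =
  ((2 * k + 3)%:R * (P k.+1 x + x * dP k.+1 x) - k.+1%:R * dP k x) / k.+2%:R.
Proof.
rewrite legendreSS !derivE !hornerE /=.
by field; exact: natrSD_neq0.
Qed.

(* P_k(-1) = (-1)^k; this is what makes -1 a Radau node. *)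
Lemma legendre_at_m1 k : P k (-1) = (-1) ^+ k.
Proof.
suff: P k (-1) = (-1) ^+ k /\ P k.+1 (-1) = (-1) ^+ k.+1 by case.
elim: k => [|k [IHk IHk1]]; first by rewrite horner_legendre0 horner_legendre1.
split=> //; rewrite horner_legendreSS IHk IHk1 !exprS.
by field; exact: natrSD_neq0.
Qed.

Lemma legendre_deriv_identity n x :
  (1 - x ^+ 2) * dP n.+1 x = n.+1%:R * (P n x - x * P n.+1 x) /\
  (1 - x ^+ 2) * dP n x = n.+1%:R * (x * P n x - P n.+1 x).
Proof.
elim: n => [|n [IHn1 IHn]].
  rewrite horner_dlegendre1 horner_dlegendre0 horner_legendre0 horner_legendre1.
  by split; ring.
split; last by rewrite IHn1 horner_legendreSS; field; exact: natrSD_neq0.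
have -> : (1 - x ^+ 2) * dP n.+2 x = ((2 * n + 3)%:R * ((1 - x ^+ 2) * P n.+1 x
    + x * ((1 - x ^+ 2) * dP n.+1 x)) - n.+1%:R * ((1 - x ^+ 2) * dP n x)) / n.+2%:R.
  by rewrite horner_dlegendreSS; field; exact: natrSD_neq0.
by rewrite IHn1 IHn horner_legendreSS; field; exact: natrSD_neq0.
Qed.

Definition legendre_kernel n (x y : R) :=
  \sum_(k < n) (2 * k + 1)%:R * (P k x * P k y).

Lemma legendre_kernelS n x y :
  legendre_kernel n.+1 x y = legendre_kernel n x y + (2 * n + 1)%:R * (P n x * P n y).
Proof. by rewrite /legendre_kernel big_ord_recr. Qed.

Lemma christoffel_darboux n x y : (x - y) * legendre_kernel n.+1 x y =
  n.+1%:R * (P n.+1 x * P n y - P n x * P n.+1 y).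
Proof.
elim: n => [|n IHn].
  rewrite legendre_kernelS /legendre_kernel big_ord0.
  by rewrite !horner_legendre0 !horner_legendre1; ring.
rewrite legendre_kernelS mulrDr IHn !horner_legendreSS.
by field; exact: natrSD_neq0.
Qed.

Lemma christoffel_darboux_diag n x : legendre_kernel n.+1 x x =
  n.+1%:R * (dP n.+1 x * P n x - dP n x * P n.+1 x).
Proof.
elim: n => [|n IHn].
  rewrite legendre_kernelS /legendre_kernel big_ord0 !horner_legendre0.
  by rewrite horner_legendre1 horner_dlegendre0 horner_dlegendre1; ring.
rewrite legendre_kernelS IHn horner_legendreSS horner_dlegendreSS.
by field; exact: natrSD_neq0.
Qed.

End LegendreValues.

(* The Radau nodes of order N are the roots a of P_N + P_{N+1}, stated below
   as P_{N+1}(a) = -P_N(a). *)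
Section RadauNodes.

Variables (R : realFieldType) (N : nat).
Local Notation P k := (horner (legendre R k)).
Local Notation dP k := (horner (legendre R k)^`()).
Local Notation K := (@legendre_kernel R).

Lemma radau_node_m1 : P N.+1 (-1) = - P N (-1).
Proof. by rewrite !legendre_at_m1 exprS mulN1r. Qed.

Lemma legendre_kernel_gt0 n b : 0 < K n.+1 b b.
Proof.
rewrite /legendre_kernel big_ord_recl /= horner_legendre0 !mul1r.
apply: (lt_le_trans ltr01); rewrite lerDl.
by apply: sumr_ge0 => i _; rewrite mulr_ge0 ?ler0n // -expr2 sqr_ge0.
Qed.

Lemma legendre_kernel_radau_orth a b : a != b ->
  P N.+1 a = - P N a -> P N.+1 b = - P N b -> K N.+1 a b = 0.
Proof.
move=> hab ha hb; have := christoffel_darboux N a b; rewrite ha hb.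
have -> : N.+1%:R * (- P N a * P N b - P N a * - P N b) = 0 :> R by ring.
by move/eqP; rewrite mulf_eq0 subr_eq0 (negbTE hab) => /eqP.
Qed.

(* At a Radau node a <> -1 the weight is the inverse of the kernel:
   omega_a K_{N+1}(a, a) = 2.  The confluent formula gives
   K_{N+1}(a, a) = (N+1) P_N(a) (P_N' + P_{N+1}')(a), and the differential
   identities give (1 - a)(P_N' + P_{N+1}')(a) = 2 (N+1) P_N(a). *)
Lemma lgr_weight_kernel a : a != -1 -> P N.+1 a = - P N a ->
  lgr_weight N a * K N.+1 a a = 2.
Proof.
move=> ha1 ha.
have hKa := christoffel_darboux_diag N a; rewrite ha in hKa.
have hPa : P N a != 0.
  apply: contraTneq (legendre_kernel_gt0 N a) => hP0.
  by rewrite hKa hP0 oppr0 !mulr0 subr0 mulr0 ltxx.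
have [hd1 hd0] := legendre_deriv_identity N a; rewrite ha in hd1 hd0.
have hsum : (1 - a) * (dP N.+1 a + dP N a) = 2 * N.+1%:R * P N a.
  have h1a : 1 + a != 0 by apply: contra ha1; rewrite addrC addr_eq0.
  apply: (mulfI h1a); rewrite mulrA (_ : (1 + a) * (1 - a) = 1 - a ^+ 2); last by ring.
  by rewrite mulrDr hd1 hd0; ring.
rewrite hKa /lgr_weight.
have -> : ((N.+1%:R ^+ 2)^-1 * ((1 - a) / P N a ^+ 2)) *
    (N.+1%:R * (dP N.+1 a * P N a - dP N a * - P N a))
  = (N.+1%:R * P N a)^-1 * ((1 - a) * (dP N.+1 a + dP N a)).
  by field; rewrite hPa addrC natr1 pnatr_eq0.
by rewrite hsum; field; rewrite hPa addrC natr1 pnatr_eq0.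
Qed.

(* The coefficients alpha_{kb}/gamma_k, tested against P_k at a Radau node
   a <> -1, reproduce the kernel: the correction term (-1)^{N+k} P_N(b)
   turns K_N into K_{N+1} because K_{N+1}(-1, a) = 0. *)
Lemma lalpha_kernel a b : a != -1 -> P N.+1 a = - P N a ->
  \sum_(k < N) (lalpha N k b / lgamma R k) * P k a = lgr_weight N b / 2 * K N.+1 b a.
Proof.
move=> ha1 ha; set w := lgr_weight N b.
have hexpand : \sum_(k < N) (lalpha N k b / lgamma R k) * P k a =
    w / 2 * (K N b a - (-1) ^+ N * P N b * K N (-1) a).
  rewrite /legendre_kernel mulr_sumr -sumrB mulr_sumr; apply: eq_bigr => k _.
  rewrite /lalpha /lgamma -/w exprD -(legendre_at_m1 R k).
  by field; rewrite -natrM natr1 pnatr_eq0.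
have hKm1 : K N (-1) a = - (2 * N + 1)%:R * ((-1) ^+ N * P N a).
  have h0 : K N.+1 (-1) a = 0.
    by apply: legendre_kernel_radau_orth radau_node_m1 ha; rewrite eq_sym.
  move: h0; rewrite legendre_kernelS legendre_at_m1 => /eqP.
  by rewrite addr_eq0 => /eqP ->; rewrite mulNr.
rewrite hexpand hKm1 legendre_kernelS.
have -> : K N b a - (-1) ^+ N * P N b * (- (2 * N + 1)%:R * ((-1) ^+ N * P N a))
    = K N b a + (2 * N + 1)%:R * (P N b * P N a) * ((-1) ^+ N) ^+ 2 by ring.
by rewrite sqrr_sign mulr1.
Qed.

Lemma lalpha_reproducing a b : a != -1 -> b != -1 ->
  P N.+1 a = - P N a -> P N.+1 b = - P N b ->
  \sum_(k < N) (lalpha N k b / lgamma R k) * P k a = (a == b)%:R.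
Proof.
move=> ha1 hb1 ha hb; rewrite lalpha_kernel //.
have [<-|hab] := eqVneq a b.
  by rewrite mulrAC lgr_weight_kernel // divff // pnatr_eq0.
by rewrite legendre_kernel_radau_orth ?mulr0 // eq_sym.
Qed.

End RadauNodes.

Lemma size_deriv_le (R : nzRingType) (p : {poly R}) : (size p^`() <= (size p).-1)%N.
Proof. exact: size_poly. Qed.

Lemma poly_eq0_at_nodes (R : idomainType) n (y : 'I_n -> R) (q : {poly R}) :
  injective y -> (size q <= n)%N -> (forall i, q.[y i] = 0) -> q = 0.
Proof.
move=> hy hq hroot; apply: (@roots_geq_poly_eq0 _ _ [seq y i | i <- enum 'I_n]).
- by apply/allP => _ /mapP [i _ ->]; apply/eqP; exact: hroot.
- by rewrite map_inj_uniq ?enum_uniq.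
- by rewrite size_map size_enum_ord.
Qed.

Lemma deriv_eq0_const (R : numDomainType) (p : {poly R}) c :
  p^`() = 0 -> p = (p.[c])%:P.
Proof.
move=> hd; suff hp : (size p <= 1)%N.
  by rewrite {1}(size1_polyC hp) [p in p.[c]](size1_polyC hp) hornerC.
apply/leq_sizeP => [[|j]] // _.
have /eqP : p^`()`_j = 0 by rewrite hd coef0.
by rewrite coef_deriv mulrn_eq0 /= => /eqP.
Qed.

Lemma deriv_interp_unique (R : numFieldType) n (y : 'I_n -> R) c (p q : {poly R}) :
  injective y -> (size p <= n.+1)%N -> (size q <= n.+1)%N ->
  p.[c] = q.[c] -> (forall i, p^`().[y i] = q^`().[y i]) -> p = q.
Proof.
move=> hy hp hq hc hd; apply/eqP; rewrite -subr_eq0; apply/eqP.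
have hd0 : (p - q)^`() = 0.
  apply: (poly_eq0_at_nodes hy) => [|i]; last by rewrite derivB hornerD hornerN hd subrr.
  apply: leq_trans (size_deriv_le (p - q)) _; rewrite -subn1 leq_subLR add1n.
  by apply: leq_trans (size_polyD _ _) _; rewrite size_polyN geq_max hp hq.
by rewrite (deriv_eq0_const c hd0) hornerD hornerN hc subrr.
Qed.

Lemma deriv_antideriv (R : numFieldType) (p : {poly R}) : (antideriv p)^`() = p.
Proof.
rewrite /antideriv derivB derivC subr0; apply/polyP => i.
rewrite coef_deriv /poly_prim coef_poly.
case: ifP => hi; first by rewrite -[_ *+ i.+1]mulr_natr divfK ?pnatr_eq0.
by rewrite mul0rn nth_default // leqNgt -ltnS hi.
Qed.

Lemma antideriv_at_m1 (R : fieldType) (p : {poly R}) : (antideriv p).[-1] = 0.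
Proof. by rewrite /antideriv hornerD hornerN hornerC subrr. Qed.

Lemma size_antideriv (R : fieldType) (p : {poly R}) :
  (size (antideriv p) <= (size p).+1)%N.
Proof.
apply: leq_trans (size_polyD _ _) _; rewrite size_polyN geq_max size_poly /=.
exact: leq_trans (size_polyC_leq1 _) _.
Qed.

Theorem proposition4p3 (R : realFieldType) (N : nat) (hN : (0 < N)%N)
  (x : 'I_N.+1 -> R)
  (hx_inj : injective x)
  (hx_root : forall j, root (legendre R N + legendre R N.+1) (x j))
  (hx0 : x ord0 = -1)
  (B : 'I_N.+1 -> {poly R})
  (hBdeg : forall j, (size (B j) <= N.+1)%N)
  (hB0a : (B ord0).[-1] = 1)
  (hB0b : forall i : 'I_N.+1, (0 < i)%N -> (B ord0)^`().[x i] = 0)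
  (hBja : forall j : 'I_N.+1, (0 < j)%N -> (B j).[-1] = 0)
  (hBjb : forall i j : 'I_N.+1, (0 < i)%N -> (0 < j)%N ->
            (B j)^`().[x i] = (i == j)%:R) :
  B ord0 = 1 /\
  forall j : 'I_N.+1, (0 < j)%N ->
    B j = \sum_(k < N) (lalpha N k (x j) / lgamma R k) *: antideriv (legendre R k).
Proof.
pose y (i : 'I_N) := x (lift ord0 i).
have hy : injective y by move=> i i' /hx_inj /lift_inj.
have hradau j : (legendre R N.+1).[x j] = - (legendre R N).[x j].
  by apply/eqP; rewrite -addr_eq0 addrC -hornerD; exact: hx_root.
have hx_m1 (j : 'I_N.+1) : (0 < j)%N -> x j != -1.
  by rewrite -hx0 (inj_eq hx_inj); apply: contraTneq => ->.
split.
  apply: (deriv_interp_unique (c := -1) hy (hBdeg ord0)).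
  - by rewrite size_poly1.
  - by rewrite hB0a hornerC.
  - by move=> i; rewrite derivC hornerC hB0b.
move=> j hj; apply: (deriv_interp_unique (c := -1) hy (hBdeg j)).
- apply: leq_trans (size_sum _ _ _) _; apply/bigmax_leqP => k _.
  apply: leq_trans (size_scale_leq _ _) _; apply: leq_trans (size_antideriv _) _.
  exact: leq_trans (size_legendre _ _) (ltn_ord k).
- by rewrite hBja // horner_sum big1 // => k _; rewrite hornerZ antideriv_at_m1 mulr0.
- move=> i; rewrite hBjb // linear_sum horner_sum /=.
  under eq_bigr => k _ do rewrite linearZ /= deriv_antideriv hornerZ.
  by rewrite lalpha_reproducing ?hx_m1 ?hradau // /y (inj_eq hx_inj).
Qed.
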